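(* Let $K,G:[0,\infty)\to\mathbb{R}$ be continuous, let $f$ solve $f''+Kf=0$ with $f>0$ on $(0,\infty)$ and $\int_1^\infty f(t)^{-2}dt<\infty$, and let $m$ solve $m''+Gm=0$ with $m(0)=f(0)$, $m'(0)=f'(0)$. Suppose the support of $G-K$ is contained in a bounded interval $[a,b]\subset[1,\infty)$, and assume $\alpha(m)<\infty$. Then $$\int_a^b|Gm-Kf|\,dt\le(\alpha(m)+1)\|G-K\|_2\,\|f|_{[a,b]}\|_2+\alpha(m)\int_a^b|f''|\,dt,$$ $$\int_b^\infty|Gm-Kf|\,dt\le\alpha(m)\int_b^\infty|f''|\,dt,$$ and consequently $$\int_0^\infty|Gm-Kf|\,dt\le\alpha(m)\int_a^\infty|f''|\,dt+(\alpha(m)+1)\|G-K\|_2\,\|f|_{[a,b]}\|_2.$$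
   Context: Notation: $\|G-K\|_2:=\sqrt{\int_0^\infty|G-K|^2dt}$; $\|f|_{[a,b]}\|_2:=\sqrt{\int_a^b f(t)^2dt}$; $\sigma(t):=m(t)/f(t)-1$ for $t>0$; $\alpha(m):=\sup_{t>0}|\sigma(t)|$. *)

From Stdlib Require Import Reals Lra.
Open Scope R_scope.

Definition cont_nonneg (K : R -> R) : Prop :=
  forall t, 0 <= t -> forall eps, 0 < eps -> exists delta, 0 < delta /\
    forall s, 0 <= s -> Rabs (s - t) < delta -> Rabs (K s - K t) < eps.

Definition deriv_nonneg (f df : R -> R) : Prop :=
  forall t, 0 <= t -> forall eps, 0 < eps -> exists delta, 0 < delta /\
    forall h, h <> 0 -> Rabs h < delta -> 0 <= t + h ->
      Rabs ((f (t + h) - f t) / h - df t) < eps.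

Definition Rint (g : R -> R) (a b v : R) : Prop :=
  exists pr : Riemann_integrable g a b, RiemannInt pr = v.

Definition improper_int (g : R -> R) (a l : R) : Prop :=
  (forall T, a <= T -> exists v, Rint g a T v) /\
  forall eps, 0 < eps -> exists M, forall T v, M <= T -> a <= T ->
    Rint g a T v -> Rabs (v - l) < eps.

(* Up to [a] the functions [m] and [f] solve the same linear equation [u'' + K u = 0] with the
   same initial data, so [m = f] on [[0, a]] (energy estimate and Gronwall) and the defect
   [|G m - K f|] vanishes there.  For [t > 0] write [m = f (1 + s)] with [|s| <= alpha]; then
   [G m - K f = (G - K) f (1 + s) + K f s] and [K f = - f''], whence
   [|G m - K f| <= (alpha + 1) |G - K| f + alpha |f''|].  Integrating over [[a, b]], with
   Cauchy-Schwarz on the first term, and over [[b, oo)], where [G = K], gives the estimates. *)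

From Stdlib Require Import Reals Lra Classical.
Open Scope R_scope.

Lemma Rmax_lipschitz s t c : Rabs (Rmax s c - Rmax t c) <= Rabs (s - t).
Proof.
  unfold Rmax; destruct (Rle_dec s c), (Rle_dec t c);
    unfold Rabs; repeat destruct Rcase_abs; lra.
Qed.

Lemma cont_nonneg_continuity g :
  cont_nonneg g <-> forall t, continuity_pt (fun s => g (Rmax s 0)) t.
Proof.
  split.
  - intros hg t eps heps.
    destruct (hg (Rmax t 0) (Rmax_r t 0) eps heps) as [d [hd hcont]].
    exists d; split; [exact hd|]; intros s [_ hs]; simpl in *; unfold R_dist in *.
    apply hcont; [apply Rmax_r|].
    exact (Rle_lt_trans _ _ _ (Rmax_lipschitz s t 0) hs).
  - intros hg t ht eps heps.
    destruct (hg t eps heps) as [d [hd hcont]].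
    exists d; split; [exact hd|]; intros s hs hst.
    destruct (Req_dec s t) as [->|hne]; [rewrite Rminus_diag, Rabs_R0; lra|].
    specialize (hcont s (conj (conj I (not_eq_sym hne)) hst)).
    simpl in hcont; unfold R_dist in hcont.
    now rewrite !Rmax_left in hcont.
Qed.

Lemma cont_nonneg_ext g1 g2 : (forall t, 0 <= t -> g1 t = g2 t) ->
  cont_nonneg g1 -> cont_nonneg g2.
Proof.
  intros heq hg t ht eps heps.
  destruct (hg t ht eps heps) as [d [hd hcont]].
  exists d; split; [exact hd|]; intros s hs hst.
  rewrite <- !heq by assumption; auto.
Qed.

Lemma cont_nonneg_comp g h : cont_nonneg g -> continuity h ->
  cont_nonneg (fun t => h (g t)).
Proof.
  rewrite !cont_nonneg_continuity; intros hg hh t.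
  apply (continuity_pt_comp (fun s => g (Rmax s 0)) h); auto.
Qed.

Lemma cont_nonneg_mult g1 g2 : cont_nonneg g1 -> cont_nonneg g2 ->
  cont_nonneg (fun t => g1 t * g2 t).
Proof.
  rewrite !cont_nonneg_continuity; intros h1 h2 t.
  now apply continuity_pt_mult.
Qed.

Lemma cont_nonneg_minus g1 g2 : cont_nonneg g1 -> cont_nonneg g2 ->
  cont_nonneg (fun t => g1 t - g2 t).
Proof.
  rewrite !cont_nonneg_continuity; intros h1 h2 t.
  now apply continuity_pt_minus.
Qed.

Lemma cont_nonneg_abs g : cont_nonneg g -> cont_nonneg (fun t => Rabs (g t)).
Proof. intros hg; exact (cont_nonneg_comp g Rabs hg Rcontinuity_abs). Qed.

Lemma cont_nonneg_pow2 g : cont_nonneg g -> cont_nonneg (fun t => g t ^ 2).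
Proof.
  intros hg; apply (cont_nonneg_comp g (fun x => x ^ 2) hg).
  intros x; apply derivable_continuous_pt, derivable_pt_pow.
Qed.

Lemma cont_nonneg_bounded g a : cont_nonneg g ->
  exists M, forall t, 0 <= t <= a -> Rabs (g t) <= M.
Proof.
  intros hg.
  destruct (Rle_lt_dec 0 a) as [ha|ha].
  2: { exists 0; intros t ht; lra. }
  destruct (continuity_ab_maj (fun s => Rabs (g (Rmax s 0))) 0 a ha) as [x [hx _]].
  { intros t _; exact (proj1 (cont_nonneg_continuity _) (cont_nonneg_abs g hg) t). }
  exists (Rabs (g (Rmax x 0))); intros t ht.
  specialize (hx t ht); simpl in hx; now rewrite Rmax_left in hx by lra.
Qed.

(* If a difference quotient stays within 1 of [dg t], then [|g s - g t| <= (1 + |dg t|) |s - t|]. *)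
Lemma deriv_nonneg_cont g dg : deriv_nonneg g dg -> cont_nonneg g.
Proof.
  intros hg t ht eps heps.
  destruct (hg t ht 1 Rlt_0_1) as [d [hd hquot]].
  set (c := 1 + Rabs (dg t)).
  assert (hc : 0 < c) by (pose proof (Rabs_pos (dg t)); unfold c; lra).
  exists (Rmin d (eps / c)); split; [apply Rmin_pos; [lra | apply Rdiv_lt_0_compat; lra]|].
  intros s hs hst.
  destruct (Req_dec s t) as [->|hne]; [rewrite Rminus_diag, Rabs_R0; lra|].
  assert (hh : s - t <> 0) by lra.
  specialize (hquot (s - t) hh (Rlt_le_trans _ _ _ hst (Rmin_l _ _))).
  replace (t + (s - t)) with s in hquot by ring.
  assert (hq : Rabs ((g s - g t) / (s - t)) <= c).
  { unfold c; replace ((g s - g t) / (s - t)) with (((g s - g t) / (s - t) - dg t) + dg t) by ring.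
    pose proof (Rabs_triang ((g s - g t) / (s - t) - dg t) (dg t)); lra. }
  replace (g s - g t) with ((g s - g t) / (s - t) * (s - t)) by (field; exact hh).
  rewrite Rabs_mult.
  assert (hst' : Rabs (s - t) < eps / c) by exact (Rlt_le_trans _ _ _ hst (Rmin_r _ _)).
  apply Rle_lt_trans with (c * Rabs (s - t)).
  - apply Rmult_le_compat_r; [apply Rabs_pos | exact hq].
  - apply (Rmult_lt_reg_r (/ c)); [apply Rinv_0_lt_compat; lra|].
    replace (c * Rabs (s - t) * / c) with (Rabs (s - t)) by (field; lra).
    exact hst'.
Qed.

Lemma Rint_unique g x y v w : Rint g x y v -> Rint g x y w -> v = w.
Proof. intros [p1 <-] [p2 <-]. apply RiemannInt_P5. Qed.

Lemma Rint_plus_scal g1 g2 x y l v1 v2 : Rint g1 x y v1 -> Rint g2 x y v2 ->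
  Rint (fun t => g1 t + l * g2 t) x y (v1 + l * v2).
Proof.
  intros [p1 <-] [p2 <-]. exists (RiemannInt_P10 l p1 p2). apply RiemannInt_P13.
Qed.

Lemma Rint_le g1 g2 x y v1 v2 : x <= y -> (forall t, x < t < y -> g1 t <= g2 t) ->
  Rint g1 x y v1 -> Rint g2 x y v2 -> v1 <= v2.
Proof. intros hxy hle [p1 <-] [p2 <-]. now apply RiemannInt_P19. Qed.

Lemma Rint_ext g1 g2 x y v : x <= y -> (forall t, x <= t <= y -> g1 t = g2 t) ->
  Rint g1 x y v -> Rint g2 x y v.
Proof.
  intros hxy heq [p1 <-].
  assert (heq' : forall t, Rmin x y <= t <= Rmax x y -> g1 t = g2 t).
  { rewrite Rmin_left, Rmax_right by exact hxy; exact heq. }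
  exists (@Riemann_integrable_ext g1 g2 x y heq' p1).
  apply Rle_antisym; apply RiemannInt_P19; auto; intros t ht; rewrite heq; lra.
Qed.

Lemma Rint_Chasles g x y z v1 v2 : Rint g x y v1 -> Rint g y z v2 -> Rint g x z (v1 + v2).
Proof.
  intros [p1 <-] [p2 <-]. exists (RiemannInt_P24 p1 p2). symmetry; apply RiemannInt_P26.
Qed.

Lemma Rint_split g x y z v : x <= y <= z -> Rint g x z v ->
  exists v1 v2, Rint g x y v1 /\ Rint g y z v2 /\ v = v1 + v2.
Proof.
  intros hy [p <-].
  exists (RiemannInt (RiemannInt_P22 p hy)), (RiemannInt (RiemannInt_P23 p hy)).
  split; [eexists; reflexivity|]; split; [eexists; reflexivity|].
  symmetry; apply RiemannInt_P26.
Qed.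

Lemma Rint_0 x y : Rint (fun _ => 0) x y 0.
Proof.
  exists (RiemannInt_P14 x y 0). exact (eq_trans (RiemannInt_P15 _) (Rmult_0_l _)).
Qed.

Lemma Rint_point g x : Rint g x x 0.
Proof. exists (RiemannInt_P7 g x). apply RiemannInt_P9. Qed.

Lemma Rint_scal g x y c v : x <= y -> Rint g x y v -> Rint (fun t => c * g t) x y (c * v).
Proof.
  intros hxy hv. pose proof (Rint_plus_scal _ _ _ _ c _ _ (Rint_0 x y) hv) as h.
  rewrite Rplus_0_l in h. eapply Rint_ext; [exact hxy | | exact h]; intros; simpl; ring.
Qed.

Lemma Rint_ge0 g x y v : x <= y -> (forall t, x < t < y -> 0 <= g t) -> Rint g x y v -> 0 <= v.
Proof. intros hxy hg. exact (Rint_le (fun _ => 0) g x y 0 v hxy hg (Rint_0 x y)). Qed.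

Lemma Rint_eq0 g x y v : x <= y -> (forall t, x < t < y -> g t = 0) -> Rint g x y v -> v = 0.
Proof.
  intros hxy hg hv; apply Rle_antisym.
  - apply (Rint_le g (fun _ => 0) x y v 0 hxy);
      [intros t ht; rewrite hg; lra | exact hv | apply Rint_0].
  - apply (Rint_ge0 g x y v hxy); [intros t ht; rewrite hg; lra | exact hv].
Qed.

Lemma Rint_le_upper g x T T' v v' : (forall t, x < t -> 0 <= g t) -> x <= T <= T' ->
  Rint g x T v -> Rint g x T' v' -> v <= v'.
Proof.
  intros hg hT hv hv'.
  destruct (Rint_split _ _ _ _ _ hT hv') as [w1 [w2 [h1 [h2 ->]]]].
  rewrite (Rint_unique _ _ _ _ _ hv h1).
  assert (0 <= w2) by (apply (Rint_ge0 g T T' w2); [lra | intros; apply hg; lra | exact h2]).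
  lra.
Qed.

Lemma Rint_cont_nonneg g x y : cont_nonneg g -> 0 <= x <= y -> exists v, Rint g x y v.
Proof.
  intros hg hxy.
  pose (p := continuity_implies_RiemannInt (proj2 hxy)
              (fun t _ => proj1 (cont_nonneg_continuity g) hg t)).
  exists (RiemannInt p).
  eapply Rint_ext; [lra | | exists p; reflexivity].
  intros t ht; simpl; now rewrite Rmax_left by lra.
Qed.

Lemma Rint_prepend_vanishing g x y z v : x <= y -> (exists w, Rint g x y w) ->
  (forall t, x < t < y -> g t = 0) -> Rint g y z v -> Rint g x z v.
Proof.
  intros hxy [w hw] hg hv.
  rewrite (Rint_eq0 g x y w hxy hg hw) in hw.
  rewrite <- (Rplus_0_l v); exact (Rint_Chasles _ _ _ _ _ _ hw hv).
Qed.

Lemma improper_int_ge_Rint g x L T v : improper_int g x L -> (forall t, x < t -> 0 <= g t) ->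
  x <= T -> Rint g x T v -> v <= L.
Proof.
  intros [hex hcv] hg hT hv.
  destruct (Rle_lt_dec v L) as [|hlt]; [assumption|]; exfalso.
  destruct (hcv (v - L) ltac:(lra)) as [M hM].
  assert (hT' : x <= Rmax M T) by (eapply Rle_trans; [exact hT | apply Rmax_r]).
  destruct (hex (Rmax M T) hT') as [v' hv'].
  assert (v <= v') by (apply (Rint_le_upper g x T (Rmax M T)); auto; split; [lra | apply Rmax_r]).
  specialize (hM _ _ (Rmax_l M T) hT' hv').
  revert hM; unfold Rabs; destruct Rcase_abs; lra.
Qed.

(* Monotone convergence: the limit is the supremum of the partial integrals. *)
Lemma improper_int_of_bounded g x B : (forall t, x < t -> 0 <= g t) ->
  (forall T, x <= T -> exists v, Rint g x T v) ->
  (forall T v, x <= T -> Rint g x T v -> v <= B) ->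
  exists J, improper_int g x J /\ J <= B.
Proof.
  intros hg hex hB.
  set (E := fun v => exists T, x <= T /\ Rint g x T v).
  assert (hbd : bound E) by (exists B; intros v [T [hT hv]]; eapply hB; eauto).
  assert (hne : exists v, E v) by (exists 0, x; split; [lra | apply Rint_point]).
  destruct (completeness E hbd hne) as [J [hub hlub]].
  exists J; split.
  - split; [exact hex|]; intros eps heps.
    assert (exists v0, E v0 /\ J - eps < v0) as [v0 [[T0 [hT0 hv0]] hlt]].
    { apply NNPP; intro hn. assert (J <= J - eps); [|lra].
      apply hlub; intros w hw. destruct (Rle_lt_dec w (J - eps)); auto.
      exfalso; apply hn; eauto. }
    exists T0; intros T v hT hxT hv.
    assert (v0 <= v) by (apply (Rint_le_upper g x T0 T); auto).
    assert (v <= J) by (apply hub; exists T; auto).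
    unfold Rabs; destruct Rcase_abs; lra.
  - apply hlub; intros v [T [hT hv]]; eapply hB; eauto.
Qed.

Lemma improper_int_comparison g k x c L : 0 <= c ->
  (forall t, x < t -> 0 <= g t) -> (forall t, x < t -> 0 <= k t) ->
  (forall t, x < t -> g t <= c * k t) ->
  (forall T, x <= T -> exists v, Rint g x T v) ->
  improper_int k x L -> exists J, improper_int g x J /\ J <= c * L.
Proof.
  intros hc hg hk hgk hex hkL.
  apply improper_int_of_bounded; [exact hg | exact hex |].
  intros T v hT hv.
  destruct (proj1 hkL T hT) as [w hw].
  assert (v <= c * w).
  { apply (Rint_le g (fun t => c * k t) x T v (c * w) hT);
      [intros t ht; apply hgk; lra | exact hv | now apply Rint_scal]. }
  assert (w <= L) by exact (improper_int_ge_Rint k x L T w hkL hk hT hw).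
  nra.
Qed.

Lemma improper_int_shift g x y L D : x <= y -> improper_int g x L -> Rint g x y D ->
  improper_int g y (L - D).
Proof.
  intros hxy [hex hcv] hD; split.
  - intros T hT. destruct (hex T ltac:(lra)) as [v hv].
    destruct (Rint_split _ _ _ _ _ (conj hxy hT) hv) as [v1 [v2 [_ [h2 _]]]].
    eauto.
  - intros eps heps. destruct (hcv eps heps) as [M hM].
    exists (Rmax M y); intros T v hT hyT hv.
    assert (hMT : M <= T) by (eapply Rle_trans; [apply Rmax_l | exact hT]).
    specialize (hM _ _ hMT ltac:(lra) (Rint_Chasles _ _ _ _ _ _ hD hv)).
    now replace (v - (L - D)) with (D + v - L) by ring.
Qed.

Lemma improper_int_prepend g x y L D : x <= y -> improper_int g y L -> Rint g x y D ->
  improper_int g x (D + L).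
Proof.
  intros hxy [hex hcv] hD; split.
  - intros T hT. destruct (Rle_lt_dec T y) as [hTy|hyT].
    + destruct (Rint_split _ _ _ _ _ (conj hT hTy) hD) as [v1 [v2 [h1 _]]]; eauto.
    + destruct (hex T ltac:(lra)) as [v hv]. eexists; exact (Rint_Chasles _ _ _ _ _ _ hD hv).
  - intros eps heps. destruct (hcv eps heps) as [M hM].
    exists (Rmax M y); intros T v hT hxT hv.
    assert (hyT : y <= T) by (eapply Rle_trans; [apply Rmax_r | exact hT]).
    destruct (Rint_split _ _ _ _ _ (conj hxy hyT) hv) as [v1 [v2 [h1 [h2 ->]]]].
    rewrite (Rint_unique _ _ _ _ _ h1 hD).
    replace (D + v2 - (D + L)) with (v2 - L) by ring.
    apply (hM T); [eapply Rle_trans; [apply Rmax_l | exact hT] | exact hyT | exact h2].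
Qed.

Lemma improper_int_of_vanishing g x y v : x <= y ->
  (forall T, x <= T -> exists w, Rint g x T w) -> (forall t, y < t -> g t = 0) ->
  Rint g x y v -> improper_int g x v.
Proof.
  intros hxy hex hg hv; split; [exact hex|].
  intros eps heps; exists y; intros T w hT hxT hw.
  destruct (Rint_split _ _ _ _ _ (conj hxy hT) hw) as [w1 [w2 [h1 [h2 ->]]]].
  rewrite (Rint_unique _ _ _ _ _ h1 hv).
  rewrite (Rint_eq0 g y T w2 hT); [| intros; apply hg; lra | exact h2].
  now replace (v + 0 - v) with 0 by ring; rewrite Rabs_R0.
Qed.

(* Optimising gives [l = sqrt F / sqrt N]; the degenerate cases [N = 0], [F = 0] need other [l]. *)
Lemma le_sqrt_mult_of_AM_GM P N F : 0 <= N -> 0 <= F ->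
  (forall l, 0 < l -> 2 * P <= l * N + F / l) -> P <= sqrt N * sqrt F.
Proof.
  intros hN hF h.
  assert (0 <= sqrt N * sqrt F) by (apply Rmult_le_pos; apply sqrt_pos).
  destruct (Rle_lt_dec P 0); [lra|].
  destruct (Rle_lt_or_eq_dec _ _ hN) as [hN'|<-].
  - destruct (Rle_lt_or_eq_dec _ _ hF) as [hF'|<-].
    + pose proof (sqrt_lt_R0 _ hN'). pose proof (sqrt_lt_R0 _ hF').
      specialize (h (sqrt F / sqrt N) ltac:(apply Rdiv_lt_0_compat; auto)).
      rewrite <- (sqrt_sqrt N), <- (sqrt_sqrt F) in h at 2 by lra.
      replace (sqrt F / sqrt N * (sqrt N * sqrt N) + sqrt F * sqrt F / (sqrt F / sqrt N))
        with (2 * (sqrt N * sqrt F)) in h by (field; lra).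
      lra.
    + specialize (h (P / N) ltac:(apply Rdiv_lt_0_compat; auto)).
      replace (P / N * N + 0 / (P / N)) with P in h by (field; lra). lra.
  - specialize (h ((F + 1) / P) ltac:(apply Rdiv_lt_0_compat; lra)).
    replace ((F + 1) / P * 0 + F / ((F + 1) / P)) with (P * F / (F + 1)) in h by (field; lra).
    apply (Rmult_le_compat_r (F + 1)) in h; [|lra].
    replace (P * F / (F + 1) * (F + 1)) with (P * F) in h by (field; lra).
    nra.
Qed.

Lemma Rint_Cauchy_Schwarz g f x y N F P : x <= y -> (forall t, x < t < y -> 0 <= f t) ->
  Rint (fun t => g t ^ 2) x y N -> Rint (fun t => f t ^ 2) x y F ->
  Rint (fun t => Rabs (g t) * f t) x y P -> P <= sqrt N * sqrt F.
Proof.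
  intros hxy hf hN hF hP.
  apply le_sqrt_mult_of_AM_GM.
  - refine (Rint_ge0 _ x y N hxy _ hN); intros; apply pow2_ge_0.
  - refine (Rint_ge0 _ x y F hxy _ hF); intros; apply pow2_ge_0.
  - intros l hl.
    pose proof (Rint_plus_scal _ _ _ _ (/ l) _ _ (Rint_scal _ _ _ l _ hxy hN) hF) as hsum.
    replace (l * N + F / l) with (l * N + / l * F) by (unfold Rdiv; ring).
    refine (Rint_le _ _ x y _ _ hxy _ (Rint_scal _ _ _ 2 _ hxy hP) hsum).
    intros t ht; simpl; specialize (hf t ht).
    assert (hsq : l * g t ^ 2 + / l * f t ^ 2 - 2 * (Rabs (g t) * f t) =
                  (l * Rabs (g t) - f t) ^ 2 / l) by (rewrite <- (pow2_abs (g t)); field; lra).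
    assert (0 <= (l * Rabs (g t) - f t) ^ 2 / l)
      by (apply Rmult_le_pos; [apply pow2_ge_0 | apply Rlt_le, Rinv_0_lt_compat, hl]).
    lra.
Qed.

Lemma deriv_nonneg_minus g1 dg1 g2 dg2 : deriv_nonneg g1 dg1 -> deriv_nonneg g2 dg2 ->
  deriv_nonneg (fun t => g1 t - g2 t) (fun t => dg1 t - dg2 t).
Proof.
  intros h1 h2 t ht eps heps.
  destruct (h1 t ht (eps / 2) ltac:(lra)) as [d1 [hd1 k1]].
  destruct (h2 t ht (eps / 2) ltac:(lra)) as [d2 [hd2 k2]].
  exists (Rmin d1 d2); split; [apply Rmin_pos; lra|].
  intros h hh hlt hth.
  specialize (k1 h hh (Rlt_le_trans _ _ _ hlt (Rmin_l _ _)) hth).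
  specialize (k2 h hh (Rlt_le_trans _ _ _ hlt (Rmin_r _ _)) hth).
  replace ((g1 (t + h) - g2 (t + h) - (g1 t - g2 t)) / h - (dg1 t - dg2 t)) with
    (((g1 (t + h) - g1 t) / h - dg1 t) - ((g2 (t + h) - g2 t) / h - dg2 t)) by (field; exact hh).
  revert k1 k2; unfold Rabs; repeat destruct Rcase_abs; lra.
Qed.

(* Extending [g] by the constant [g 0] to the left is differentiable at [0] because [dg 0 = 0]. *)
Lemma derivable_pt_lim_Rmax0 g dg : deriv_nonneg g dg -> dg 0 = 0 ->
  forall t, derivable_pt_lim (fun s => g (Rmax s 0)) t (dg (Rmax t 0)).
Proof.
  intros hg hdg0 t eps heps.
  assert (hflat : forall h, h <> 0 -> t + h <= 0 -> t <= 0 ->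
            Rabs ((g (Rmax (t + h) 0) - g (Rmax t 0)) / h - dg (Rmax t 0)) < eps).
  { intros h hh hth ht. rewrite !Rmax_right, hdg0 by lra.
    now replace ((g 0 - g 0) / h - 0) with 0 by (field; exact hh); rewrite Rabs_R0. }
  destruct (Rlt_le_dec 0 t) as [ht|ht].
  - destruct (hg t (Rlt_le _ _ ht) eps heps) as [d [hd hquot]].
    exists (mkposreal _ (Rmin_pos _ _ hd ht)); simpl; intros h hh hlt.
    assert (Rabs h < t) by exact (Rlt_le_trans _ _ _ hlt (Rmin_r _ _)).
    assert (0 < t + h) by (revert H; unfold Rabs; destruct Rcase_abs; lra).
    rewrite !Rmax_left by lra.
    apply hquot; [exact hh | exact (Rlt_le_trans _ _ _ hlt (Rmin_l _ _)) | lra].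
  - destruct (Rle_lt_or_eq_dec _ _ ht) as [ht'|ht0].
    + assert (hmt : 0 < - t) by lra.
      exists (mkposreal _ hmt); simpl; intros h hh hlt.
      apply hflat; [exact hh | revert hlt; unfold Rabs; destruct Rcase_abs; lra | lra].
    + subst t; destruct (hg 0 (Rle_refl _) eps heps) as [d [hd hquot]].
      exists (mkposreal _ hd); simpl; intros h hh hlt.
      destruct (Rlt_le_dec 0 h) as [hpos|hneg]; [|apply hflat; lra].
      rewrite (Rmax_left (0 + h)), (Rmax_left 0 0) by lra.
      apply hquot; [exact hh | exact hlt | lra].
Qed.

Lemma Gronwall_zero E dE C a : (forall t, derivable_pt_lim E t (dE t)) ->
  (forall t, 0 <= t <= a -> 0 <= E t) -> E 0 = 0 ->
  (forall t, 0 < t < a -> dE t <= C * E t) ->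
  forall t, 0 <= t <= a -> E t = 0.
Proof.
  intros hE hpos hE0 hdE t ht.
  set (X := fun s => exp (- C * s)).
  assert (hX : forall s, derivable_pt_lim X s (X s * - C)).
  { intros s; unfold X.
    apply (derivable_pt_lim_comp (fun s => - C * s) exp); [| apply derivable_pt_lim_exp].
    pose proof (derivable_pt_lim_scal id (- C) s 1 (derivable_pt_lim_id s)) as hlin.
    now rewrite Rmult_1_r in hlin. }
  set (F' := fun s => dE s * X s + E s * (X s * - C)).
  assert (hF : forall s, derivable_pt_lim (fun s => E s * X s) s (F' s))
    by (intros s; apply derivable_pt_lim_mult; auto).
  destruct (Rle_lt_or_eq_dec 0 t (proj1 ht)) as [htpos|<-]; [|exact hE0].
  destruct (MVT_cor2 _ F' 0 t htpos (fun c _ => hF c)) as [c [hmvt hc]].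
  assert (hF'c : F' c <= 0).
  { unfold F'; pose proof (exp_pos (- C * c)); fold (X c) in *.
    specialize (hdE c ltac:(lra)); nra. }
  rewrite hE0, Rmult_0_l in hmvt.
  assert (E t * X t <= 0) by nra.
  pose proof (exp_pos (- C * t)); fold (X t) in *.
  pose proof (hpos t ht); nra.
Qed.

Lemma energy_derivative_le u v k : 2 * u * v * (1 - k) <= (1 + Rabs k) * (u * u + v * v).
Proof.
  assert (huv : Rabs (2 * u * v) <= u * u + v * v).
  { pose proof (Rle_0_sqr (u + v)); pose proof (Rle_0_sqr (u - v)); unfold Rsqr in *.
    unfold Rabs; destruct Rcase_abs; lra. }
  assert (hk : Rabs (1 - k) <= 1 + Rabs k).
  { unfold Rminus; pose proof (Rabs_triang 1 (- k)); rewrite Rabs_Ropp, Rabs_R1 in *; lra. }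
  pose proof (Rle_abs (2 * u * v * (1 - k))) as hle; rewrite Rabs_mult in hle.
  pose proof (Rmult_le_compat _ _ _ _ (Rabs_pos (2 * u * v)) (Rabs_pos (1 - k)) huv hk).
  lra.
Qed.

(* Energy estimate: [E = u^2 + u'^2] satisfies [E' <= (1 + sup |K|) E] on [[0, a]]. *)
Lemma linear_ode_zero_unique K u du ddu a : 0 < a -> cont_nonneg K ->
  deriv_nonneg u du -> deriv_nonneg du ddu ->
  (forall t, 0 <= t < a -> ddu t = - K t * u t) -> u 0 = 0 -> du 0 = 0 ->
  forall t, 0 <= t <= a -> u t = 0.
Proof.
  intros ha hK hu hdu hode hu0 hdu0.
  set (U := fun s => u (Rmax s 0)); set (V := fun s => du (Rmax s 0));
    set (W := fun s => ddu (Rmax s 0)).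
  assert (hU : forall t, derivable_pt_lim U t (V t)) by (apply derivable_pt_lim_Rmax0; auto).
  assert (hV : forall t, derivable_pt_lim V t (W t)).
  { apply derivable_pt_lim_Rmax0; [exact hdu|]. rewrite hode, hu0 by lra; ring. }
  destruct (cont_nonneg_bounded K a hK) as [M hM].
  assert (hE0 : forall t, 0 <= t <= a -> U t * U t + V t * V t = 0).
  { apply (Gronwall_zero _ (fun s => V s * U s + U s * V s + (W s * V s + V s * W s)) (1 + M)).
    - intros t; apply derivable_pt_lim_plus; apply derivable_pt_lim_mult; auto.
    - intros t _; nra.
    - unfold U, V; rewrite Rmax_right, hu0, hdu0 by lra; ring.
    - intros t ht; unfold U, V, W; rewrite Rmax_left, hode by lra.
      pose proof (energy_derivative_le (u t) (du t) (K t)).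
      pose proof (hM t ltac:(lra)).
      assert (0 <= u t * u t + du t * du t) by nra.
      nra. }
  intros t ht; specialize (hE0 t ht); unfold U, V in hE0; rewrite Rmax_left in hE0 by lra.
  nra.
Qed.

Lemma Rabs_mul_sub_mul_le g k x y s : 0 < y -> Rabs (x / y - 1) <= s ->
  Rabs (g * x - k * y) <= (s + 1) * (Rabs (g - k) * y) + s * Rabs (k * y).
Proof.
  intros hy hs.
  assert (h1 : Rabs (1 + (x / y - 1)) <= s + 1).
  { pose proof (Rabs_triang 1 (x / y - 1)); rewrite Rabs_R1 in *; lra. }
  replace (g * x - k * y) with ((g - k) * y * (1 + (x / y - 1)) + k * y * (x / y - 1))
    by (field; lra).
  eapply Rle_trans; [apply Rabs_triang|].
  rewrite !Rabs_mult, (Rabs_right y), (Rmult_comm (s + 1)), (Rmult_comm s) by lra.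
  apply Rplus_le_compat; apply Rmult_le_compat_l; try assumption;
    apply Rmult_le_pos; [apply Rabs_pos | lra | apply Rabs_pos | lra].
Qed.

Section DefectEstimates.

Variables K G f df ddf m dm ddm : R -> R.
Variables a b alpha : R.
Hypotheses (hK : cont_nonneg K) (hG : cont_nonneg G).
Hypotheses (hf1 : deriv_nonneg f df) (hf2 : deriv_nonneg df ddf).
Hypothesis hfode : forall t, 0 <= t -> ddf t + K t * f t = 0.
Hypothesis hfpos : forall t, 0 < t -> 0 < f t.
Hypotheses (hm1 : deriv_nonneg m dm) (hm2 : deriv_nonneg dm ddm).
Hypothesis hmode : forall t, 0 <= t -> ddm t + G t * m t = 0.
Hypotheses (hm0 : m 0 = f 0) (hdm0 : dm 0 = df 0).
Hypotheses (ha : 1 <= a) (hab : a <= b).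
Hypothesis hsupp : forall t, 0 <= t -> (t < a \/ b < t) -> G t = K t.
Hypothesis halpha :
  is_lub (fun y => exists t, 0 < t /\ y = Rabs (m t / f t - 1)) alpha.

Lemma ratio_deviation_le t : 0 < t -> Rabs (m t / f t - 1) <= alpha.
Proof. intros ht; apply (proj1 halpha); now exists t. Qed.

Lemma alpha_ge0 : 0 <= alpha.
Proof. exact (Rle_trans _ _ _ (Rabs_pos _) (ratio_deviation_le 1 Rlt_0_1)). Qed.

Lemma m_eq_f_before_support t : 0 <= t <= a -> m t = f t.
Proof.
  intros ht.
  enough (m t - f t = 0) by lra.
  revert t ht; apply (linear_ode_zero_unique K (fun t => m t - f t) (fun t => dm t - df t)
                        (fun t => ddm t - ddf t) a);
    [lra | exact hK | now apply deriv_nonneg_minus | now apply deriv_nonneg_minus | | lra | lra].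
  intros t ht.
  pose proof (hfode t (proj1 ht)); pose proof (hmode t (proj1 ht)).
  rewrite (hsupp t) in * by lra; lra.
Qed.

Lemma defect_le t : 0 < t ->
  Rabs (G t * m t - K t * f t) <= (alpha + 1) * (Rabs (G t - K t) * f t) + alpha * Rabs (ddf t).
Proof.
  intros ht.
  replace (Rabs (ddf t)) with (Rabs (K t * f t))
    by (rewrite <- Rabs_Ropp; f_equal; pose proof (hfode t (Rlt_le _ _ ht)); lra).
  exact (Rabs_mul_sub_mul_le _ _ _ _ _ (hfpos t ht) (ratio_deviation_le t ht)).
Qed.

Lemma cont_nonneg_defect : cont_nonneg (fun t => Rabs (G t * m t - K t * f t)).
Proof.
  apply cont_nonneg_abs, cont_nonneg_minus; apply cont_nonneg_mult;
    eauto using deriv_nonneg_cont.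
Qed.

Lemma cont_nonneg_abs_ddf : cont_nonneg (fun t => Rabs (ddf t)).
Proof.
  apply (cont_nonneg_ext (fun t => Rabs (K t * f t))).
  - intros t ht; rewrite <- Rabs_Ropp; f_equal; pose proof (hfode t ht); lra.
  - apply cont_nonneg_abs, cont_nonneg_mult; eauto using deriv_nonneg_cont.
Qed.

Lemma defect_int_le N2 F2 I1 D1 :
  Rint (fun t => (G t - K t) ^ 2) a b N2 -> Rint (fun t => f t ^ 2) a b F2 ->
  Rint (fun t => Rabs (G t * m t - K t * f t)) a b I1 -> Rint (fun t => Rabs (ddf t)) a b D1 ->
  I1 <= (alpha + 1) * sqrt N2 * sqrt F2 + alpha * D1.
Proof.
  intros hN2 hF2 hI1 hD1.
  assert (hc : cont_nonneg (fun t => Rabs (G t - K t) * f t)).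
  { apply cont_nonneg_mult; [apply cont_nonneg_abs, cont_nonneg_minus |];
      eauto using deriv_nonneg_cont. }
  destruct (Rint_cont_nonneg _ a b hc ltac:(lra)) as [P hP].
  assert (hCS : P <= sqrt N2 * sqrt F2).
  { apply (Rint_Cauchy_Schwarz (fun t => G t - K t) f a b); auto.
    intros t ht; apply Rlt_le, hfpos; lra. }
  assert (I1 <= (alpha + 1) * P + alpha * D1).
  { refine (Rint_le _ _ a b _ _ hab _ hI1
              (Rint_plus_scal _ _ _ _ alpha _ _ (Rint_scal _ _ _ (alpha + 1) _ hab hP) hD1)).
    intros t ht; apply defect_le; lra. }
  pose proof alpha_ge0.
  assert ((alpha + 1) * P <= (alpha + 1) * (sqrt N2 * sqrt F2)) by (apply Rmult_le_compat_l; lra).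
  lra.
Qed.

Lemma defect_improper_tail L : improper_int (fun t => Rabs (ddf t)) b L ->
  exists J, improper_int (fun t => Rabs (G t * m t - K t * f t)) b J /\ J <= alpha * L.
Proof.
  apply improper_int_comparison;
    [exact alpha_ge0 | intros; apply Rabs_pos | intros; apply Rabs_pos | |].
  - intros t ht.
    pose proof (defect_le t ltac:(lra)) as hle.
    rewrite (hsupp t) in * by lra.
    now rewrite Rminus_diag, Rabs_R0, Rmult_0_l, Rmult_0_r, Rplus_0_l in hle.
  - intros T hT; apply Rint_cont_nonneg; [exact cont_nonneg_defect | lra].
Qed.

Lemma defect_vanishes_before_support t : 0 <= t < a -> Rabs (G t * m t - K t * f t) = 0.
Proof.
  intros ht.
  rewrite m_eq_f_before_support, (hsupp t), Rminus_diag, Rabs_R0 by lra; reflexivity.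
Qed.

Lemma sq_diff_improper_int N2 : Rint (fun t => (G t - K t) ^ 2) a b N2 ->
  improper_int (fun t => (G t - K t) ^ 2) 0 N2.
Proof.
  intros hN2.
  assert (hq : cont_nonneg (fun t => (G t - K t) ^ 2))
    by (apply cont_nonneg_pow2, cont_nonneg_minus; assumption).
  apply (improper_int_of_vanishing _ 0 b);
    [lra | intros T hT; apply Rint_cont_nonneg; auto; lra | |].
  - intros t ht; rewrite (hsupp t) by lra; ring.
  - apply (Rint_prepend_vanishing _ 0 a); [lra | apply Rint_cont_nonneg; auto; lra | | exact hN2].
    intros t ht; rewrite (hsupp t) by lra; ring.
Qed.

Lemma defect_improper_int N2 F2 I1 D1 :
  Rint (fun t => (G t - K t) ^ 2) a b N2 -> Rint (fun t => f t ^ 2) a b F2 ->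
  Rint (fun t => Rabs (G t * m t - K t * f t)) a b I1 -> Rint (fun t => Rabs (ddf t)) a b D1 ->
  forall L, improper_int (fun t => Rabs (ddf t)) a L ->
  exists J, improper_int (fun t => Rabs (G t * m t - K t * f t)) 0 J /\
    J <= alpha * L + (alpha + 1) * sqrt N2 * sqrt F2.
Proof.
  intros hN2 hF2 hI1 hD1 L hL.
  destruct (defect_improper_tail (L - D1) (improper_int_shift _ a b L D1 hab hL hD1))
    as [Jb [hJb hJbL]].
  assert (hnull : Rint (fun t => Rabs (G t * m t - K t * f t)) 0 a 0).
  { apply (Rint_prepend_vanishing _ 0 a); [lra | | | apply Rint_point].
    - apply Rint_cont_nonneg; [exact cont_nonneg_defect | lra].
    - intros t ht; apply defect_vanishes_before_support; lra. }
  exists (0 + (I1 + Jb)); split.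
  - apply (improper_int_prepend _ 0 a); [lra | | exact hnull].
    exact (improper_int_prepend _ a b _ _ hab hJb hI1).
  - pose proof (defect_int_le N2 F2 I1 D1 hN2 hF2 hI1 hD1).
    replace (alpha * (L - D1)) with (alpha * L - alpha * D1) in hJbL by ring.
    lra.
Qed.

End DefectEstimates.

Theorem lemma2p4
  (K G f df ddf m dm ddm : R -> R) (a b alpha : R)
  (hK : cont_nonneg K) (hG : cont_nonneg G)
  (hf1 : deriv_nonneg f df) (hf2 : deriv_nonneg df ddf)
  (hfode : forall t, 0 <= t -> ddf t + K t * f t = 0)
  (hfpos : forall t, 0 < t -> 0 < f t)
  (hfint : exists l, improper_int (fun t => / (f t) ^ 2) 1 l)
  (hm1 : deriv_nonneg m dm) (hm2 : deriv_nonneg dm ddm)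
  (hmode : forall t, 0 <= t -> ddm t + G t * m t = 0)
  (hm0 : m 0 = f 0) (hdm0 : dm 0 = df 0)
  (ha : 1 <= a) (hab : a <= b)
  (hsupp : forall t, 0 <= t -> (t < a \/ b < t) -> G t = K t)
  (halpha : is_lub (fun y => exists t, 0 < t /\ y = Rabs (m t / f t - 1)) alpha) :
  exists N2 F2 I1 D1,
    improper_int (fun t => (G t - K t) ^ 2) 0 N2 /\
    Rint (fun t => (f t) ^ 2) a b F2 /\
    Rint (fun t => Rabs (G t * m t - K t * f t)) a b I1 /\
    Rint (fun t => Rabs (ddf t)) a b D1 /\
    I1 <= (alpha + 1) * sqrt N2 * sqrt F2 + alpha * D1 /\
    (forall L, improper_int (fun t => Rabs (ddf t)) b L ->
       exists J, improper_int (fun t => Rabs (G t * m t - K t * f t)) b J /\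
         J <= alpha * L) /\
    (forall L, improper_int (fun t => Rabs (ddf t)) a L ->
       exists J, improper_int (fun t => Rabs (G t * m t - K t * f t)) 0 J /\
         J <= alpha * L + (alpha + 1) * sqrt N2 * sqrt F2).
Proof.
  assert (h0ab : 0 <= a <= b) by lra.
  pose proof (deriv_nonneg_cont f df hf1) as hfc.
  destruct (Rint_cont_nonneg (fun t => (G t - K t) ^ 2) a b) as [N2 hN2];
    [apply cont_nonneg_pow2, cont_nonneg_minus; assumption | exact h0ab |].
  destruct (Rint_cont_nonneg (fun t => f t ^ 2) a b (cont_nonneg_pow2 f hfc) h0ab) as [F2 hF2].
  destruct (Rint_cont_nonneg _ a b (cont_nonneg_defect K G f df m dm hK hG hf1 hm1) h0ab)
    as [I1 hI1].
  destruct (Rint_cont_nonneg _ a b (cont_nonneg_abs_ddf K f df ddf hK hf1 hfode) h0ab)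
    as [D1 hD1].
  exists N2, F2, I1, D1.
  refine (conj _ (conj hF2 (conj hI1 (conj hD1 (conj _ (conj _ _)))))).
  - apply (sq_diff_improper_int K G a b); assumption.
  - apply (defect_int_le K G f df ddf m a b alpha); assumption.
  - apply (defect_improper_tail K G f df ddf m dm a b alpha); assumption.
  - eapply (defect_improper_int K G f df ddf m dm ddm a b alpha); eassumption.
Qed.
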